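(* Let $L$ be a flat layout. There exists a tuple morphism $f$ with $L_f=L$ if and only if $L$ is tractable.
   Context: $\langle n\rangle_*=\{*,1,\dots,n\}$. A tuple morphism $f:(s_1,\dots,s_m)\to(t_1,\dots,t_n)$ between tuples of positive integers is given by a pointed map $\alpha:\langle m\rangle_*\to\langle n\rangle_*$ ($\alpha( * )=*$) such that each $j\in\{1,\dots,n\}$ has at most one preimage and $s_i=t_{\alpha(i)}$ whenever $\alpha(i)\ne*$. Its encoded flat layout is $L_f=(s_1,\dots,s_m):(d_1,\dots,d_m)$ with $d_i=0$ if $\alpha(i)=*$ and $d_i=\prod_{j<\alpha(i)}t_j$ otherwise. A flat layout is a pair $(s_1,\dots,s_m):(d_1,\dots,d_m)$ of a tuple of positive integers and a tuple of nonnegative integers of the same length, with modes $s_i:d_i$. Order modes by $s:d\preceq s':d'$ iff $d<d'$ or ($d=d'$ and $s\le s'$); $\mathrm{sort}(L)$ is the stable reordering of the modes into $\preceq$-nondecreasing order. $L$ is tractable if, writing $\mathrm{sort}(L)=(s'_1,\dots,s'_m):(d'_1,\dots,d'_m)$, for each $1\le i<m$ either $d'_i=0$ or $s'_id'_i$ divides $d'_{i+1}$. *)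

From mathcomp Require Import all_boot.
Set Implicit Arguments. Unset Strict Implicit. Unset Printing Implicit Defensive.

(* Tuple morphism f : (s_1..s_m) -> (t_1..t_n) given by a pointed map
   <m>_* -> <n>_*, encoded as alpha : 'I_m -> option 'I_n (None = * ).
   Indices are 0-based: position i of the paper is i-1 here. *)
Record tuple_morphism := TupleMorphism {
  tm_src : seq nat;
  tm_tgt : seq nat;
  tm_map : 'I_(size tm_src) -> option 'I_(size tm_tgt);
  tm_src_pos : all (fun x => 0 < x) tm_src;
  tm_tgt_pos : all (fun x => 0 < x) tm_tgt;
  tm_inj : forall i i' j, tm_map i = Some j -> tm_map i' = Some j -> i = i';
  tm_compat : forall i j, tm_map i = Some j -> nth 0 tm_src i = nth 0 tm_tgt j
}.

Definition tm_strides (f : tuple_morphism) : seq nat :=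
  [seq match @tm_map f i with
       | None => 0
       | Some k => \prod_(j < k) nth 0 (tm_tgt f) j
       end | i <- enum 'I_(size (tm_src f))].

Record flat_layout := FlatLayout {
  fl_shape : seq nat;
  fl_stride : seq nat;
  fl_size : size fl_shape = size fl_stride;
  fl_pos : all (fun x => 0 < x) fl_shape
}.

Definition encodes (f : tuple_morphism) (L : flat_layout) : Prop :=
  tm_src f = fl_shape L /\ tm_strides f = fl_stride L.

Definition modes (L : flat_layout) : seq (nat * nat) := zip (fl_shape L) (fl_stride L).

Definition mode_le (a b : nat * nat) : bool :=
  (a.2 < b.2) || ((a.2 == b.2) && (a.1 <= b.1)).

(* Stable sort (mathcomp's path.sort is a stable merge sort). *)
Definition sort_layout (L : flat_layout) : seq (nat * nat) := sort mode_le (modes L).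

Definition tractable (L : flat_layout) : Prop :=
  let M := sort_layout L in
  forall i, i.+1 < size M ->
    (nth (0,0) M i).2 = 0 \/
    (nth (0,0) M i).1 * (nth (0,0) M i).2 %| (nth (0,0) M i.+1).2.

From mathcomp Require Import all_boot zify.
Set Implicit Arguments. Unset Strict Implicit. Unset Printing Implicit Defensive.

(* The strides of L_f are prefix products P_k = t_0 ... t_(k-1) of the target
   tuple, and the mode of stride P_k has shape t_k.  For k < k' the product
   t_k P_k = P_(k+1) divides P_k'; if instead k' < k, then P_k >= t_k' P_k' >= P_k',
   so t_k:P_k <= t_k':P_k' (mode order) forces t_k' = t_k = 1 and again t_k P_k = P_k'.
   Conversely, a tractable layout whose sorted modes are s'_p:d'_p is realized
   by the target tuple with the gap d'_p / (s'_(p-1) d'_(p-1)) in slot 2p and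
   the shape s'_p in slot 2p+1: the prefix product before slot 2p+1 is d'_p,
   and each mode of nonzero stride is sent to the odd slot of its sorted
   position. *)

Definition prefix_prod (t : seq nat) (k : nat) : nat := \prod_(j < k) nth 0 t j.

Lemma prefix_prodS t k : prefix_prod t k.+1 = prefix_prod t k * nth 0 t k.
Proof. exact: big_ord_recr. Qed.

Lemma prefix_prod_dvd t k k' : k <= k' -> prefix_prod t k %| prefix_prod t k'.
Proof.
elim: k' => [|k' IHk']; first by rewrite leqn0 => /eqP ->.
rewrite leq_eqVlt ltnS => /orP[/eqP -> // | /IHk' dvd_k].
by rewrite prefix_prodS dvdn_mulr.
Qed.

Lemma prefix_prod_gt0 t k :
  all (fun x => 0 < x) t -> k <= size t -> 0 < prefix_prod t k.
Proof.
move=> t_pos; elim: k => [|k IHk] lt_k_t; first by rewrite /prefix_prod big_ord0.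
rewrite prefix_prodS muln_gt0 IHk ?(ltnW lt_k_t) //.
by move/allP: t_pos; apply; rewrite mem_nth.
Qed.

Lemma prefix_prod_mode_dvd t k k' :
  all (fun x => 0 < x) t -> k < size t -> k' < size t -> k != k' ->
  mode_le (nth 0 t k, prefix_prod t k) (nth 0 t k', prefix_prod t k') ->
  nth 0 t k * prefix_prod t k %| prefix_prod t k'.
Proof.
move=> t_pos lt_k lt_k' neq_kk'; rewrite mulnC -prefix_prodS.
case: ltngtP neq_kk' => // [lt_kk' | lt_k'k] _ le_modes.
  exact: prefix_prod_dvd.
have P'_gt0 := prefix_prod_gt0 t_pos (ltnW lt_k').
have t'_gt0 : 0 < nth 0 t k' by move/allP: t_pos; apply; rewrite mem_nth.
have t_gt0 : 0 < nth 0 t k by move/allP: t_pos; apply; rewrite mem_nth.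
have le_P'S_P : prefix_prod t k' * nth 0 t k' <= prefix_prod t k.
  rewrite -prefix_prodS; apply: dvdn_leq; last exact: prefix_prod_dvd.
  exact: prefix_prod_gt0 (ltnW lt_k).
move: le_modes; rewrite /mode_le /= => /orP[lt_P_P' | /andP[/eqP eq_P le_t]].
  by nia.
have t'1 : nth 0 t k' = 1 by nia.
have t1 : nth 0 t k = 1 by lia.
by rewrite prefix_prodS eq_P t1 muln1.
Qed.

Lemma nth_tm_strides f (i : 'I_(size (tm_src f))) :
  nth 0 (tm_strides f) i =
  if tm_map i is Some k then prefix_prod (tm_tgt f) k else 0.
Proof. by rewrite /tm_strides (nth_map i) ?size_enum_ord // nth_ord_enum. Qed.

Lemma tm_strides_mode_dvd f (i j : 'I_(size (tm_src f))) :
  i != j -> nth 0 (tm_strides f) i != 0 ->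
  mode_le (nth 0 (tm_src f) i, nth 0 (tm_strides f) i)
          (nth 0 (tm_src f) j, nth 0 (tm_strides f) j) ->
  nth 0 (tm_src f) i * nth 0 (tm_strides f) i %| nth 0 (tm_strides f) j.
Proof.
rewrite !nth_tm_strides => neq_ij.
case map_i: (tm_map i) => [k|] // _.
case map_j: (tm_map j) => [k'|]; last by rewrite dvdn0.
rewrite (tm_compat map_i) (tm_compat map_j).
apply: prefix_prod_mode_dvd (tm_tgt_pos f) (ltn_ord k) (ltn_ord k') _.
apply: contra neq_ij => /eqP/val_inj eq_kk'.
by rewrite eq_kk' in map_i; rewrite (tm_inj map_i map_j).
Qed.

Lemma mode_le_total : total mode_le.
Proof.
by move=> [s d] [s' d']; rewrite /mode_le /=; case: ltngtP => //= _; exact: leq_total.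
Qed.

Section SortedModes.

Variable L : flat_layout.
Local Notation n := (size (fl_shape L)).

Lemma size_modes : size (modes L) = n.
Proof. by rewrite /modes size_zip -fl_size minnn. Qed.

Lemma nth_modes i :
  nth (0, 0) (modes L) i = (nth 0 (fl_shape L) i, nth 0 (fl_stride L) i).
Proof. by rewrite /modes nth_zip ?fl_size. Qed.

Definition sort_index : seq nat := s2val (perm_iota_sort mode_le (0, 0) (modes L)).

Lemma perm_sort_index : perm_eq sort_index (iota 0 n).
Proof.
by rewrite -size_modes; exact: (s2valP (perm_iota_sort mode_le (0, 0) (modes L))).
Qed.

Lemma sort_layoutE : sort_layout L = map (nth (0, 0) (modes L)) sort_index.
Proof. exact: (s2valP' (perm_iota_sort mode_le (0, 0) (modes L))). Qed.

Lemma size_sort_index : size sort_index = n.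
Proof. by rewrite (perm_size perm_sort_index) size_iota. Qed.

Lemma size_sort_layout : size (sort_layout L) = n.
Proof. by rewrite sort_layoutE size_map size_sort_index. Qed.

Lemma uniq_sort_index : uniq sort_index.
Proof. by rewrite (perm_uniq perm_sort_index) iota_uniq. Qed.

Lemma mem_sort_index i : (i \in sort_index) = (i < n).
Proof. by rewrite (perm_mem perm_sort_index) mem_iota. Qed.

Lemma sort_layout_sorted : sorted mode_le (sort_layout L).
Proof. exact: sort_sorted mode_le_total _. Qed.

Lemma sort_layout_shape_pos : all (fun m => 0 < m.1) (sort_layout L).
Proof.
rewrite /sort_layout (perm_all _ (permEl (perm_sort _ _))).
apply/(all_nthP (0, 0)) => i; rewrite size_modes nth_modes => lt_i /=.
by move/allP: (fl_pos L); apply; rewrite mem_nth.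
Qed.

Definition sort_pos (i : nat) : nat := index i sort_index.

Lemma sort_pos_lt i : i < n -> sort_pos i < n.
Proof. by rewrite -mem_sort_index => mem_i; rewrite -size_sort_index index_mem. Qed.

Lemma sort_pos_inj i j : i < n -> j < n -> sort_pos i = sort_pos j -> i = j.
Proof. by rewrite -!mem_sort_index; exact: index_inj. Qed.

Lemma nth_sort_layout_pos i :
  i < n -> nth (0, 0) (sort_layout L) (sort_pos i) = nth (0, 0) (modes L) i.
Proof.
move=> lt_i; rewrite sort_layoutE (nth_map 0) ?nth_index ?mem_sort_index //.
by rewrite size_sort_index sort_pos_lt.
Qed.

Lemma tractable_of_distinct_modes :
  (forall i j, i < n -> j < n -> i != j ->
     (nth (0, 0) (modes L) i).2 != 0 ->
     mode_le (nth (0, 0) (modes L) i) (nth (0, 0) (modes L) j) ->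
     (nth (0, 0) (modes L) i).1 * (nth (0, 0) (modes L) i).2
       %| (nth (0, 0) (modes L) j).2) ->
  tractable L.
Proof.
move=> modes_dvd M p; rewrite /M size_sort_layout => lt_pS.
have lt_p := ltnW lt_pS.
have index_lt q : q < n -> nth 0 sort_index q < n.
  by move=> lt_q; rewrite -mem_sort_index mem_nth ?size_sort_index.
have neq_idx : nth 0 sort_index p != nth 0 sort_index p.+1.
  by rewrite nth_uniq ?size_sort_index ?uniq_sort_index // (ltn_eqF (ltnSn p)).
have := sortedP (0, 0) sort_layout_sorted p; rewrite size_sort_layout => /(_ lt_pS).
rewrite sort_layoutE !(nth_map 0) ?size_sort_index //.
case: (eqVneq (nth (0, 0) (modes L) (nth 0 sort_index p)).2 0) => [-> | d_neq0] le_modes.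
  by left.
by right; apply: modes_dvd (index_lt _ lt_p) (index_lt _ lt_pS) neq_idx d_neq0 le_modes.
Qed.

End SortedModes.

Lemma tractable_of_encodes f L : encodes f L -> tractable L.
Proof.
case=> src_f strides_f; apply: tractable_of_distinct_modes => i j lt_i lt_j.
rewrite !nth_modes /= -src_f -strides_f in lt_i lt_j *.
exact: (@tm_strides_mode_dvd f (Ordinal lt_i) (Ordinal lt_j)).
Qed.

Section Realization.

Variable M : seq (nat * nat).
Hypothesis M_shape_pos : all (fun m => 0 < m.1) M.
Hypothesis M_sorted : sorted mode_le M.
Hypothesis M_tractable : forall p, p.+1 < size M ->
  (nth (0, 0) M p).2 = 0 \/
  (nth (0, 0) M p).1 * (nth (0, 0) M p).2 %| (nth (0, 0) M p.+1).2.

Local Notation s p := (nth (0, 0) M p).1.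
Local Notation d p := (nth (0, 0) M p).2.

Definition extent_below (p : nat) : nat :=
  if p is q.+1 then (if d q == 0 then 1 else s q * d q) else 1.

Definition realizing_entry (j : nat) : nat :=
  let p := j./2 in
  if d p == 0 then 1 else if odd j then s p else d p %/ extent_below p.

Definition realizing_tuple : seq nat := mkseq realizing_entry (size M).*2.

Lemma size_realizing_tuple : size realizing_tuple = (size M).*2.
Proof. exact: size_mkseq. Qed.

Lemma realizing_entry_even p :
  realizing_entry p.*2 = if d p == 0 then 1 else d p %/ extent_below p.
Proof. by rewrite /realizing_entry doubleK odd_double. Qed.

Lemma realizing_entry_odd p :
  realizing_entry p.*2.+1 = if d p == 0 then 1 else s p.
Proof. by rewrite /realizing_entry -[_./2]/(uphalf _) uphalf_double /= odd_double. Qed.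

Lemma shape_gt0 p : p < size M -> 0 < s p.
Proof. by move=> lt_p; move/allP: M_shape_pos; apply; rewrite mem_nth. Qed.

Lemma stride_le p : p.+1 < size M -> d p <= d p.+1.
Proof.
move=> lt_pS; have := sortedP (0, 0) M_sorted p lt_pS.
by rewrite /mode_le => /orP[/ltnW // | /andP[/eqP -> _]].
Qed.

Lemma extent_below_dvd p : p < size M -> extent_below p %| d p.
Proof.
case: p => [|q] //= lt_qS; case: eqVneq => // d_neq0.
by have [/eqP|] := M_tractable lt_qS; first by rewrite (negbTE d_neq0).
Qed.

Lemma extent_below_stride0 p : p < size M -> d p = 0 -> extent_below p = 1.
Proof. by case: p => [|q] //= lt_qS d0; have := stride_le lt_qS; rewrite d0 leqn0 => ->. Qed.

Lemma extent_below_gt0 p : p < size M -> 0 < extent_below p.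
Proof.
case: p => [|q] //= lt_qS; case: eqVneq => //= d_neq0.
by rewrite muln_gt0 shape_gt0 ?lt0n // ltnW.
Qed.

Lemma realizing_tuple_pos : all (fun x => 0 < x) realizing_tuple.
Proof.
apply/allP => x /(nthP 0)[j]; rewrite size_realizing_tuple => lt_j <-.
have lt_p : j./2 < size M by rewrite ltn_half_double.
rewrite nth_mkseq // /realizing_entry; case: eqVneq => // d_neq0.
case: odd; first exact: shape_gt0.
rewrite divn_gt0 ?extent_below_gt0 //.
by apply: dvdn_leq; [rewrite lt0n | exact: extent_below_dvd].
Qed.

Lemma prefix_prod_realizing_even p :
  p <= size M -> prefix_prod realizing_tuple p.*2 = extent_below p.
Proof.
elim: p => [|p IHp] lt_p; first by rewrite /prefix_prod big_ord0.
have lt_2p : p.*2.+1 < (size M).*2 by rewrite ltn_Sdouble.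
rewrite doubleS 2!prefix_prodS IHp ?(ltnW lt_p) // !nth_mkseq ?(ltnW lt_2p) //.
rewrite realizing_entry_even realizing_entry_odd /=.
case: eqVneq => [d0 | d_neq0]; first by rewrite extent_below_stride0.
by rewrite [_ * (_ %/ _)]mulnC divnK ?extent_below_dvd // mulnC.
Qed.

Lemma nth_realizing_odd p :
  p < size M -> nth 0 realizing_tuple p.*2.+1 = if d p == 0 then 1 else s p.
Proof. by move=> lt_p; rewrite nth_mkseq ?realizing_entry_odd // ltn_Sdouble. Qed.

Lemma prefix_prod_realizing_odd p :
  p < size M -> d p != 0 -> prefix_prod realizing_tuple p.*2.+1 = d p.
Proof.
move=> lt_p d_neq0; rewrite prefix_prodS prefix_prod_realizing_even ?(ltnW lt_p) //.
rewrite nth_mkseq ?realizing_entry_even ?(negbTE d_neq0); last by rewrite ltn_double.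
by rewrite mulnC divnK ?extent_below_dvd.
Qed.

End Realization.

Section Backward.

Variable L : flat_layout.
Hypothesis L_tractable : tractable L.
Local Notation n := (size (fl_shape L)).
Local Notation T := (realizing_tuple (sort_layout L)).

Lemma slot_lt (i : 'I_n) : (sort_pos L i).*2.+1 < size T.
Proof.
by rewrite size_realizing_tuple size_sort_layout ltn_Sdouble sort_pos_lt.
Qed.

Definition slot_map (i : 'I_n) : option 'I_(size T) :=
  if nth 0 (fl_stride L) i == 0 then None else Some (Ordinal (slot_lt i)).

Lemma slot_map_inj i i' k : slot_map i = Some k -> slot_map i' = Some k -> i = i'.
Proof.
rewrite /slot_map; case: eqP => // _ [<-]; case: eqP => // _ [] /double_inj.
by move/sort_pos_inj => eq_i'i; apply/val_inj/esym/eq_i'i.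
Qed.

Lemma slot_map_compat i k : slot_map i = Some k -> nth 0 (fl_shape L) i = nth 0 T k.
Proof.
rewrite /slot_map; case: eqVneq => // d_neq0 [<-] /=.
rewrite nth_realizing_odd ?size_sort_layout ?sort_pos_lt //.
by rewrite nth_sort_layout_pos // nth_modes /= (negbTE d_neq0).
Qed.

Definition realizing_morphism : tuple_morphism :=
  TupleMorphism (fl_pos L) (realizing_tuple_pos (sort_layout_shape_pos L) L_tractable)
    slot_map_inj slot_map_compat.

Lemma realizing_morphism_encodes : encodes realizing_morphism L.
Proof.
split=> //; apply: (@eq_from_nth _ 0).
  by rewrite /tm_strides size_map size_enum_ord -fl_size.
rewrite /tm_strides size_map size_enum_ord => i lt_i.
rewrite (nth_tm_strides (Ordinal lt_i)) /= /slot_map.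
case: eqVneq => [-> // | d_neq0] /=.
have slot_stride : (nth (0, 0) (sort_layout L) (sort_pos L i)).2 = nth 0 (fl_stride L) i.
  by rewrite nth_sort_layout_pos // nth_modes.
rewrite (prefix_prod_realizing_odd (sort_layout_sorted L) L_tractable) ?slot_stride //.
by rewrite size_sort_layout sort_pos_lt.
Qed.

End Backward.

Theorem mainTheorem8 (L : flat_layout) :
  (exists f : tuple_morphism, encodes f L) <-> tractable L.
Proof.
split=> [[f f_encodes_L] | L_tractable]; first exact: tractable_of_encodes f_encodes_L.
by exists (realizing_morphism L_tractable); exact: realizing_morphism_encodes.
Qed.
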